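(* Let $k\ge 2$ and $R(z)=\sum_{l=1}^k\frac{\alpha_l}{z-p_l}$ with all $\alpha_l>0$, $p_1=-1$, $p_2=1$, and $p_l>1$ for $3\le l\le k$. Define $g(x)=\operatorname{Re}R\!\left(x+i\sqrt{1-x^2}\right)$ for $x\in(-1,1)$ (the real part of $R$ along the open upper unit half-circle). If $k\ge 3$, then $g$ is strictly decreasing on $(-1,1)$; if $k=2$, then $g$ is constant, equal to $\frac{\alpha_1-\alpha_2}{2}$. *)

(* The complex plane is modelled by an arbitrary
   numClosedFieldType C (e.g. C = complex numbers), with 'i, 'Re, sqrtC. *)
From HB Require Import structures.
From mathcomp Require Import all_boot all_order all_algebra.
Set Implicit Arguments. Unset Strict Implicit. Unset Printing Implicit Defensive.
Import Order.TTheory GRing.Theory Num.Theory.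
Local Open Scope ring_scope.

(* R(z) = sum_{l=1}^k alpha_l / (z - p_l); indices shifted to 0..k-1 *)
Definition Rfun (C : numClosedFieldType) (k : nat) (alpha p : nat -> C) (z : C) : C :=
  \sum_(l < k) alpha l / (z - p l).

Definition gfun (C : numClosedFieldType) (k : nat) (alpha p : nat -> C) (x : C) : C :=
  'Re (Rfun k alpha p (x + 'i * sqrtC (1 - x ^+ 2))).

(* On the unit circle, |z - p|^2 = 1 + p^2 - 2 p x for z = x + i sqrt(1 - x^2),
   so each summand of g is alpha_l (x - p_l) / (1 + p_l^2 - 2 p_l x).  This is
   the constant 1/2 for p = -1, the constant -1/2 for p = 1, and strictly
   decreasing in x when p > 1: cross-multiplying, the difference of two values
   is (y - x)(p^2 - 1) over a positive denominator. *)
From HB Require Import structures.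
From mathcomp Require Import all_boot all_order all_algebra.
From mathcomp Require Import ring.
Import Order.TTheory GRing.Theory Num.Theory.
Local Open Scope ring_scope.

Definition circle_term {F : fieldType} (p x : F) : F :=
  (x - p) / (1 + p ^+ 2 - p * x *+ 2).

Lemma one_sub_sqr_gt0 (R : numDomainType) (x : R) :
  -1 < x -> x < 1 -> 0 < 1 - x ^+ 2.
Proof.
move=> gt_x_m1 lt_x_1.
rewrite -(expr1n R 2) subr_sqr mulr_gt0 ?subr_gt0 //.
by rewrite -ltrBlDl sub0r.
Qed.

Lemma Re_inv_circle (C : numClosedFieldType) (p x s : C) :
  p \is Num.real -> x \is Num.real -> s \is Num.real -> s ^+ 2 = 1 - x ^+ 2 ->
  'Re (x + 'i * s - p)^-1 = circle_term p x.
Proof.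
move=> pR xR sR s2.
have xpR : x - p \is Num.real by rewrite rpredB.
rewrite addrAC ReV normC2_Re_Im Re_rect ?Im_rect // s2 /circle_term.
by congr (_ / _); ring.
Qed.

Lemma gfun_sum (C : numClosedFieldType) (k : nat) (alpha p : nat -> C) (x : C) :
  (forall l, (l < k)%N -> alpha l \is Num.real) ->
  (forall l, (l < k)%N -> p l \is Num.real) ->
  x \is Num.real -> -1 < x -> x < 1 ->
  gfun k alpha p x = \sum_(0 <= l < k) alpha l * circle_term (p l) x.
Proof.
move=> alphaR pR xR gt_x_m1 lt_x_1.
have s_ge0 : 0 <= 1 - x ^+ 2 by rewrite ltW ?one_sub_sqr_gt0.
rewrite /gfun /Rfun raddf_sum big_mkord; apply: eq_bigr => l _.
have lt_l_k := ltn_ord l.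
rewrite /= ReMl ?alphaR // Re_inv_circle ?pR ?sqrtC_real ?sqrtCK //.
Qed.

Lemma circle_term_m1 (F : numFieldType) (x : F) :
  x != -1 -> circle_term (-1) x = 2^-1.
Proof.
rewrite /circle_term -subr_eq0 opprK => x1_neq0.
have ->: 1 + (-1) ^+ 2 - -1 * x *+ 2 = (x + 1) * 2 by ring.
by rewrite invfM mulrA divff // mul1r.
Qed.

Lemma circle_term_1 (F : numFieldType) (x : F) :
  x != 1 -> circle_term 1 x = - 2^-1.
Proof.
rewrite /circle_term -subr_eq0 => x1_neq0.
have ->: 1 + 1 ^+ 2 - 1 * x *+ 2 = - (x - 1) * 2 by ring.
by rewrite invfM invrN mulNr mulrN mulrA divff // mul1r.
Qed.

Lemma circle_denom_gt0 (F : numFieldType) (p x : F) :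
  1 < p -> x < 1 -> 0 < 1 + p ^+ 2 - p * x *+ 2.
Proof.
move=> gt_p_1 lt_x_1.
have ->: 1 + p ^+ 2 - p * x *+ 2 = (p - 1) ^+ 2 + p * (1 - x) *+ 2 by ring.
rewrite addr_gt0 ?exprn_gt0 ?mulrn_wgt0 ?mulr_gt0 ?subr_gt0 //.
exact: lt_trans ltr01 gt_p_1.
Qed.

Lemma circle_term_decr (F : numFieldType) (p x y : F) :
  1 < p -> x < y -> y < 1 -> circle_term p y < circle_term p x.
Proof.
move=> gt_p_1 lt_xy lt_y_1.
have lt_x_1 := lt_trans lt_xy lt_y_1.
rewrite /circle_term ltr_pdivrMr ?circle_denom_gt0 // mulrAC.
rewrite ltr_pdivlMr ?circle_denom_gt0 // -subr_gt0.
have ->: (x - p) * (1 + p ^+ 2 - p * y *+ 2) - (y - p) * (1 + p ^+ 2 - p * x *+ 2)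
    = (y - x) * ((p - 1) * (p + 1)) by ring.
rewrite !mulr_gt0 ?subr_gt0 // addr_gt0 //; exact: lt_trans ltr01 gt_p_1.
Qed.

Lemma gfun_split (C : numClosedFieldType) (k : nat) (alpha p : nat -> C) (x : C) :
  (2 <= k)%N ->
  (forall l, (l < k)%N -> alpha l \is Num.real) ->
  (forall l, (l < k)%N -> p l \is Num.real) ->
  p 0%N = -1 -> p 1%N = 1 ->
  x \is Num.real -> -1 < x -> x < 1 ->
  gfun k alpha p x =
    (alpha 0%N - alpha 1%N) / 2 + \sum_(2 <= l < k) alpha l * circle_term (p l) x.
Proof.
move=> ge_k_2 alphaR pR p0 p1 xR gt_x_m1 lt_x_1.
rewrite gfun_sum // big_ltn ?(ltnW ge_k_2) // big_ltn // p0 p1.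
rewrite circle_term_m1 ?gt_eqF // circle_term_1 ?lt_eqF //.
by rewrite addrA mulrN -mulrBl.
Qed.

Theorem lemma3 (C : numClosedFieldType) (k : nat) (alpha p : nat -> C)
  (hk : (2 <= k)%N)
  (halpha_real : forall l, (l < k)%N -> alpha l \is Num.real)
  (halpha_pos : forall l, (l < k)%N -> 0 < alpha l)
  (hp0 : p 0%N = -1) (hp1 : p 1%N = 1)
  (hp_real : forall l, (2 <= l < k)%N -> p l \is Num.real)
  (hp_gt1 : forall l, (2 <= l < k)%N -> 1 < p l) :
  ((3 <= k)%N ->
     forall x y : C, x \is Num.real -> y \is Num.real ->
       -1 < x -> x < y -> y < 1 -> gfun k alpha p y < gfun k alpha p x)
  /\
  (k = 2%N ->
     forall x : C, x \is Num.real -> -1 < x -> x < 1 ->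
       gfun k alpha p x = (alpha 0%N - alpha 1%N) / 2).
Proof.
have pR l : (l < k)%N -> p l \is Num.real.
  case: l => [|[|l]] lt_l_k; rewrite ?hp0 ?hp1 ?rpredN ?rpred1 //.
  by rewrite hp_real.
have tail_decr l x y : (2 <= l < k)%N -> x < y -> y < 1 ->
    alpha l * circle_term (p l) y < alpha l * circle_term (p l) x.
  move=> /andP[ge_l_2 lt_l_k] lt_xy lt_y_1.
  by rewrite ltr_pM2l ?halpha_pos ?circle_term_decr ?hp_gt1 ?ge_l_2.
split=> [ge_k_3 x y xR yR gt_x_m1 lt_xy lt_y_1 | ek x xR gt_x_m1 lt_x_1].
- have gt_y_m1 := lt_trans gt_x_m1 lt_xy.
  have lt_x_1 := lt_trans lt_xy lt_y_1.
  rewrite !gfun_split // ltrD2l big_ltn // [X in _ < X]big_ltn //.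
  rewrite ltr_leD ?tail_decr ?ge_k_3 //.
  apply: ler_sum_nat => l /andP[ge_l_3 lt_l_k].
  by rewrite ltW ?tail_decr ?lt_l_k ?(leq_trans _ ge_l_3).
- by subst k; rewrite gfun_split // big_geq ?addr0.
Qed.
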